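(* Let $A=\{a_n\}_{n\in\mathbb Z}\subset\mathbb R$ be an almost periodic set. Then there is a number $d>0$ such that for every $\eta>0$ there exists $N_\eta$ with the property that for every half-interval $I=[x,x+l)$ of length $l=l(I)>N_\eta$, $$\left|\frac{\#(A\cap I)}{l(I)}-d\right|<\eta.$$
   Context: A discrete locally finite multiset $A=\{a_n\}_{n\in\mathbb Z}\subset\mathbb R$ (a point may occur several times in the sequence) is called almost periodic if for every $\varepsilon>0$ the set of $\varepsilon$-almost periods $$E_\varepsilon=\{\tau\in\mathbb R:\ \exists\text{ a bijection }\sigma:\mathbb Z\to\mathbb Z\text{ with }\sup_n|a_n+\tau-a_{\sigma(n)}|<\varepsilon\}$$ is relatively dense, i.e. there is $L_\varepsilon>0$ such that $E_\varepsilon\cap(x,x+L_\varepsilon)\neq\emptyset$ for every $x\in\mathbb R$. $\#(A\cap H)$ denotes the number of indices $n$ with $a_n\in H$ (multiplicities counted). *)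

From Stdlib Require Import Reals ZArith List.
Open Scope R_scope.

(* A multiset A = {a_n}_{n in Z} is given as a sequence a : Z -> R. *)

Definition locally_finite (a : Z -> R) : Prop :=
  forall x y : R, exists l : list Z, forall n : Z, x <= a n <= y -> In n l.

Definition bijZ (s : Z -> Z) : Prop :=
  exists g : Z -> Z, (forall n, g (s n) = n) /\ (forall m, s (g m) = m).

Definition almost_period (a : Z -> R) (eps tau : R) : Prop :=
  exists sigma : Z -> Z, bijZ sigma /\
    exists delta : R, delta < eps /\
      forall n : Z, Rabs (a n + tau - a (sigma n)) <= delta.

Definition relatively_dense (E : R -> Prop) : Prop :=
  exists L : R, 0 < L /\ forall x : R, exists tau, x < tau < x + L /\ E tau.

Definition almost_periodic (a : Z -> R) : Prop :=
  locally_finite a /\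
  forall eps : R, 0 < eps -> relatively_dense (almost_period a eps).

(* count a x y k :  #(A ∩ [x, y)) = k, multiplicities counted, i.e. the number
   of indices n with x <= a n < y equals k. *)
Definition count_in (a : Z -> R) (x y : R) (k : nat) : Prop :=
  exists l : list Z, NoDup l /\ length l = k /\
    (forall n : Z, In n l <-> x <= a n < y).

(** The almost periods give, for every shift t, an injective reindexing of A
    that moves each point by t up to a bounded error.  Hence windows of the
    same length have counts differing by at most a constant C, every window
    of a fixed length contains a point, and counts grow at most linearly.
    Let d be the supremum of the (bounded) set of r for which, at some scale
    l0 >= 1, every window of length l0 holds at least r l0 points.  For a
    window I of length l, comparison with all other windows of length l shows
    that (#(A ∩ I) - C) / l is such an r at scale l, so #(A ∩ I) <= d l + C;
    chopping I into windows of length l0 for an r close to d gives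
    #(A ∩ I) >= r (l - l0). *)

From Stdlib Require Import Reals ZArith List Lra Lia Classical FinFun.
Open Scope R_scope.

Section Counting.

Variable a : Z -> R.

Lemma count_in_le_inj (s : Z -> Z) x y x' y' k k' :
  Injective s -> count_in a x y k -> count_in a x' y' k' ->
  (forall n, x <= a n < y -> x' <= a (s n) < y') -> (k <= k')%nat.
Proof.
  intros Hs [l [Hnd [<- Hl]]] [l' [_ [<- Hl']]] Hmap.
  rewrite <- (length_map s l).
  apply NoDup_incl_length; [exact (Injective_map_NoDup Hs Hnd)|].
  intros m Hm; apply in_map_iff in Hm as [n [<- Hn]].
  apply Hl', Hmap, Hl, Hn.
Qed.

Lemma count_in_mono x y x' y' k k' :
  count_in a x y k -> count_in a x' y' k' -> x' <= x -> y <= y' -> (k <= k')%nat.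
Proof.
  intros Hk Hk' Hx Hy.
  apply (count_in_le_inj (fun n => n) x y x' y'); auto.
  - intros n m E; exact E.
  - intros n Hn; lra.
Qed.

Lemma count_in_unique x y k k' : count_in a x y k -> count_in a x y k' -> k = k'.
Proof.
  intros Hk Hk'.
  apply Nat.le_antisymm; eapply count_in_mono; eauto; lra.
Qed.

Lemma count_in_add x y z k1 k2 :
  x <= y <= z -> count_in a x y k1 -> count_in a y z k2 -> count_in a x z (k1 + k2).
Proof.
  intros Hxyz [l1 [Hnd1 [<- Hl1]]] [l2 [Hnd2 [<- Hl2]]].
  exists (l1 ++ l2); split; [|split].
  - apply NoDup_app; auto.
    intros n H1 H2; apply Hl1 in H1; apply Hl2 in H2; lra.
  - apply length_app.
  - intros n; rewrite in_app_iff, Hl1, Hl2.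
    destruct (Rlt_le_dec (a n) y); lra.
Qed.

Lemma count_in_pos x y k n : count_in a x y k -> x <= a n < y -> (1 <= k)%nat.
Proof.
  intros [l [_ [<- Hl]]] Hn.
  apply Hl in Hn; destruct l; [destruct Hn | simpl; lia].
Qed.

Hypothesis hlf : locally_finite a.

Lemma count_in_exists x y : exists k, count_in a x y k.
Proof.
  destruct (hlf x y) as [l Hl].
  set (inside := fun n => if Rle_dec x (a n) then
                            if Rlt_dec (a n) y then true else false else false).
  exists (length (nodup Z.eq_dec (filter inside l))).
  exists (nodup Z.eq_dec (filter inside l)).
  split; [apply NoDup_nodup | split; [reflexivity|]].
  intros n; rewrite nodup_In, filter_In; unfold inside.
  destruct (Rle_dec x (a n)), (Rlt_dec (a n) y); split;
    intros H; try (destruct H; discriminate); try lra.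
  split; [apply Hl; lra | reflexivity].
Qed.

Lemma count_in_split x h l k :
  0 <= h <= l -> count_in a x (x + l) k ->
  exists k1 k2, count_in a x (x + h) k1 /\
                count_in a (x + h) (x + h + (l - h)) k2 /\ k = (k1 + k2)%nat.
Proof.
  intros Hhl Hk.
  destruct (count_in_exists x (x + h)) as [k1 Hk1].
  destruct (count_in_exists (x + h) (x + h + (l - h))) as [k2 Hk2].
  exists k1, k2; split; [exact Hk1 | split; [exact Hk2|]].
  apply (count_in_unique x (x + l)); [exact Hk|].
  replace (x + l) with (x + h + (l - h)) by ring.
  apply (count_in_add x (x + h)); auto; lra.
Qed.

Lemma window_ind (h : R) (P : R -> R -> Prop) :
  0 < h ->
  (forall x l, 0 <= l < h -> P x l) ->
  (forall x l, h <= l -> P (x + h) (l - h) -> P x l) ->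
  forall x l, 0 <= l -> P x l.
Proof.
  intros Hh Hbase Hstep.
  assert (Hj : forall j : nat, forall x l, 0 <= l < INR j * h -> P x l).
  { induction j as [|j IH]; intros x l Hl; [simpl in Hl; lra|].
    rewrite S_INR in Hl.
    destruct (Rlt_le_dec l h); [apply Hbase; lra|].
    apply Hstep; [lra | apply IH; lra]. }
  intros x l Hl.
  destruct (INR_unbounded (l / h)) as [j Hlj].
  apply (Hj j); split; [lra|].
  apply (Rmult_lt_compat_r h) in Hlj; [|lra].
  unfold Rdiv in Hlj; rewrite Rmult_assoc, Rinv_l in Hlj; lra.
Qed.

Lemma count_in_le_of_window_le h r :
  0 < h -> 0 <= r ->
  (forall x k, count_in a x (x + h) k -> INR k <= r * h) ->
  forall x l, 0 <= l -> forall k, count_in a x (x + l) k -> INR k <= r * (l + h).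
Proof.
  intros Hh Hr Hwin.
  apply (window_ind h (fun x l => forall k, count_in a x (x + l) k ->
                                   INR k <= r * (l + h))); auto.
  - intros x l Hl k Hk.
    destruct (count_in_exists x (x + h)) as [k' Hk'].
    assert (Hkk : (k <= k')%nat) by (apply (count_in_mono x (x + l) x (x + h)); auto; lra).
    apply le_INR in Hkk; pose proof (Hwin x k' Hk'); nra.
  - intros x l Hl IH k Hk.
    destruct (count_in_split x h l k ltac:(lra) Hk) as [k1 [k2 [Hk1 [Hk2 ->]]]].
    rewrite plus_INR.
    pose proof (Hwin x k1 Hk1); pose proof (IH k2 Hk2); nra.
Qed.

Lemma count_in_ge_of_window_ge h r :
  0 < h -> 0 <= r ->
  (forall x k, count_in a x (x + h) k -> r * h <= INR k) ->
  forall x l, 0 <= l -> forall k, count_in a x (x + l) k -> r * (l - h) <= INR k.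
Proof.
  intros Hh Hr Hwin.
  apply (window_ind h (fun x l => forall k, count_in a x (x + l) k ->
                                   r * (l - h) <= INR k)); auto.
  - intros x l Hl k _; pose proof (pos_INR k); nra.
  - intros x l Hl IH k Hk.
    destruct (count_in_split x h l k ltac:(lra) Hk) as [k1 [k2 [Hk1 [Hk2 ->]]]].
    rewrite plus_INR.
    pose proof (Hwin x k1 Hk1); pose proof (IH k2 Hk2); nra.
Qed.

End Counting.

Lemma lub_approx (E : R -> Prop) d eps :
  is_lub E d -> 0 < eps -> exists r, E r /\ d - eps < r.
Proof.
  intros [_ Hleast] Heps.
  apply NNPP; intros Hnone.
  enough (d <= d - eps) by lra.
  apply Hleast; intros r Hr.
  apply Rnot_lt_le; intros Hlt; apply Hnone; exists r; auto.
Qed.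

Definition uniformly_dense (a : Z -> R) (r : R) : Prop :=
  exists l0, 1 <= l0 /\ forall x k, count_in a x (x + l0) k -> r * l0 <= INR k.

Lemma almost_period_reindex (a : Z -> R) eps t :
  almost_period a eps t ->
  exists s, Injective s /\ forall n, a n + t - eps < a (s n) < a n + t + eps.
Proof.
  intros [s [[g [Hgs _]] [delta [Hdelta Hs]]]].
  exists s; split.
  - intros n m E; rewrite <- (Hgs n), <- (Hgs m), E; reflexivity.
  - intros n; specialize (Hs n); unfold Rabs in Hs.
    destruct (Rcase_abs (a n + t - a (s n))); lra.
Qed.

Section AlmostPeriodic.

Variable a : Z -> R.
Hypothesis hA : almost_periodic a.

Let hlf : locally_finite a := proj1 hA.

Lemma almost_periodic_reindex :
  exists L, 0 < L /\ forall t, exists s, Injective s /\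
    forall n, a n + t - 1 < a (s n) < a n + t + L + 1.
Proof.
  destruct (proj2 hA 1 ltac:(lra)) as [L [HL Hdense]].
  exists L; split; [exact HL|]; intros t.
  destruct (Hdense t) as [tau [Htau Hap]].
  destruct (almost_period_reindex a 1 tau Hap) as [s [Hs Hmove]].
  exists s; split; [exact Hs|]; intros n; specialize (Hmove n); lra.
Qed.

Lemma count_in_window_bounded h :
  exists K, forall z k, count_in a z (z + h) k -> (k <= K)%nat.
Proof.
  destruct almost_periodic_reindex as [L [HL Hreindex]].
  destruct (count_in_exists a hlf (-1) (h + L + 1)) as [K HK].
  exists K; intros z k Hk.
  destruct (Hreindex (- z)) as [s [Hs Hmove]].
  apply (count_in_le_inj a s z (z + h) (-1) (h + L + 1)); auto.
  intros n Hn; specialize (Hmove n); lra.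
Qed.

Lemma count_in_shift_le :
  exists C, forall x y l k k', 0 <= l ->
    count_in a x (x + l) k -> count_in a y (y + l) k' -> (k <= k' + C)%nat.
Proof.
  destruct almost_periodic_reindex as [L [HL Hreindex]].
  destruct (count_in_window_bounded (L + 1)) as [K1 HK1].
  destruct (count_in_window_bounded 1) as [K3 HK3].
  exists (K1 + K3)%nat; intros x y l k k' Hl Hk Hk'.
  destruct (count_in_exists a hlf (y - L - 1) y) as [k1 Hk1].
  destruct (count_in_exists a hlf (y + l) (y + l + 1)) as [k3 Hk3].
  assert (k1 <= K1)%nat.
  { apply (HK1 (y - L - 1)); replace (y - L - 1 + (L + 1)) with y by ring; exact Hk1. }
  assert (k3 <= K3)%nat by exact (HK3 _ _ Hk3).
  assert (Hall : count_in a (y - L - 1) (y + l + 1) (k1 + k' + k3)).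
  { apply (count_in_add a _ (y + l)); [lra | | exact Hk3].
    apply (count_in_add a _ y); [lra | exact Hk1 | exact Hk']. }
  destruct (Hreindex (y - x - L)) as [s [Hs Hmove]].
  enough (k <= k1 + k' + k3)%nat by lia.
  apply (count_in_le_inj a s x (x + l) _ _ k _ Hs Hk Hall).
  intros n Hn; specialize (Hmove n); lra.
Qed.

Lemma count_in_long_window_pos :
  exists h, 1 <= h /\ forall x k, count_in a x (x + h) k -> (1 <= k)%nat.
Proof.
  destruct almost_periodic_reindex as [L [HL Hreindex]].
  exists (L + 2); split; [lra|]; intros x k Hk.
  destruct (Hreindex (x + 1 - a 0%Z)) as [s [_ Hmove]].
  apply (count_in_pos a x (x + (L + 2)) k (s 0%Z) Hk).
  specialize (Hmove 0%Z); lra.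
Qed.

Lemma uniformly_dense_bounded : bound (uniformly_dense a).
Proof.
  destruct (count_in_window_bounded 1) as [K HK].
  assert (HK1 : forall z k, count_in a z (z + 1) k -> INR k <= INR K * 1).
  { intros z k Hk; rewrite Rmult_1_r; exact (le_INR _ _ (HK z k Hk)). }
  exists (2 * INR K); intros r [l0 [Hl0 Hr]].
  destruct (count_in_exists a hlf 0 (0 + l0)) as [k Hk].
  pose proof (count_in_le_of_window_le a hlf 1 (INR K) ltac:(lra) (pos_INR K) HK1
                0 l0 ltac:(lra) k Hk).
  pose proof (Hr 0 k Hk); pose proof (pos_INR K).
  apply (Rmult_le_reg_r l0); nra.
Qed.

Lemma uniformly_dense_pos : exists r, 0 < r /\ uniformly_dense a r.
Proof.
  destruct count_in_long_window_pos as [h [Hh Hpos]].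
  exists (/ h); split; [apply Rinv_0_lt_compat; lra|].
  exists h; split; [exact Hh|]; intros x k Hk.
  rewrite Rinv_l by lra; apply (le_INR 1), (Hpos x k Hk).
Qed.

Lemma count_in_le_density d :
  is_upper_bound (uniformly_dense a) d ->
  exists C, 0 <= C /\ forall x l, 1 <= l -> forall k, count_in a x (x + l) k ->
    INR k <= d * l + C.
Proof.
  intros Hd.
  destruct count_in_shift_le as [C HC].
  exists (INR C); split; [apply pos_INR|]; intros x l Hl k Hk.
  enough (Hq : (INR k - INR C) / l <= d).
  { apply (Rmult_le_compat_r l) in Hq; [|lra].
    unfold Rdiv in Hq; rewrite Rmult_assoc, Rinv_l in Hq; lra. }
  apply Hd; exists l; split; [exact Hl|]; intros y k' Hk'.
  pose proof (le_INR _ _ (HC x y l k k' ltac:(lra) Hk Hk')) as Hkk.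
  rewrite plus_INR in Hkk.
  unfold Rdiv; rewrite Rmult_assoc, Rinv_l; lra.
Qed.

Lemma count_in_ge_density d eps :
  is_lub (uniformly_dense a) d -> 0 < eps <= d ->
  exists l0, 0 <= l0 /\ forall x l, 0 <= l -> forall k, count_in a x (x + l) k ->
    (d - eps) * l - d * l0 <= INR k.
Proof.
  intros Hd Heps.
  destruct (lub_approx _ d eps Hd ltac:(lra)) as [r [Hr Hdr]].
  pose proof (proj1 Hd r Hr) as Hrd; destruct Hr as [l0 [Hl0 Hr]].
  exists l0; split; [lra|]; intros x l Hl k Hk.
  pose proof (count_in_ge_of_window_ge a hlf l0 r ltac:(lra) ltac:(lra) Hr x l Hl k Hk).
  assert ((d - eps) * l <= r * l) by (apply Rmult_le_compat_r; lra).
  assert (r * l0 <= d * l0) by (apply Rmult_le_compat_r; lra).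
  lra.
Qed.

End AlmostPeriodic.

Lemma Rabs_div_sub_lt k l d eta :
  0 < l -> d * l - eta * l < k < d * l + eta * l -> Rabs (k / l - d) < eta.
Proof.
  intros Hl Hk.
  replace (k / l - d) with ((k - d * l) * / l) by (field; lra).
  rewrite Rabs_mult, Rabs_inv, (Rabs_right l) by lra.
  apply (Rmult_lt_reg_r l); [lra|].
  rewrite Rmult_assoc, Rinv_l, Rmult_1_r by lra.
  apply Rabs_def1; lra.
Qed.

Theorem proposition3 (a : Z -> R) (hA : almost_periodic a) :
  exists d : R, 0 < d /\
    forall eta : R, 0 < eta ->
      exists N : R, forall (x l : R), N < l ->
        forall k : nat, count_in a x (x + l) k ->
          Rabs (INR k / l - d) < eta.
Proof.
  destruct (uniformly_dense_pos a hA) as [r [Hr0 Hr]].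
  destruct (completeness _ (uniformly_dense_bounded a hA) (ex_intro _ r Hr))
    as [d Hd].
  assert (Hd0 : 0 < d) by (pose proof (proj1 Hd r Hr); lra).
  exists d; split; [exact Hd0|]; intros eta Heta.
  set (eps := Rmin (eta / 2) d).
  assert (Heps : 0 < eps <= d) by (split; [apply Rmin_pos | apply Rmin_r]; lra).
  assert (eps <= eta / 2) by apply Rmin_l.
  destruct (count_in_le_density a hA d (proj1 Hd)) as [C [HC0 Hupper]].
  destruct (count_in_ge_density a hA d eps Hd Heps) as [l0 [Hl0 Hlower]].
  assert (HN0 : 0 <= (C + 2 * d * l0) / eta).
  { unfold Rdiv; apply Rmult_le_pos; [nra | apply Rlt_le, Rinv_0_lt_compat; lra]. }
  exists (1 + (C + 2 * d * l0) / eta); intros x l HN k Hk.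
  assert (Hlarge : C + 2 * d * l0 < eta * l).
  { assert (Hq : (C + 2 * d * l0) / eta < l) by lra.
    apply (Rmult_lt_compat_l eta) in Hq; [|lra].
    replace (eta * ((C + 2 * d * l0) / eta)) with (C + 2 * d * l0) in Hq
      by (field; lra).
    exact Hq. }
  apply Rabs_div_sub_lt; [lra|].
  pose proof (Hupper x l ltac:(lra) k Hk); pose proof (Hlower x l ltac:(lra) k Hk).
  assert (eps * l <= eta / 2 * l) by (apply Rmult_le_compat_r; lra).
  split; nra.
Qed.
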